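(* Let $k \geq 1$ be an integer. Every outerplanar graph of girth at least $2k$ admits a homomorphism to the cycle $C_{2k+1}$.
   Context: A graph homomorphism from $G$ to $H$ is a map $f : V(G) \to V(H)$ such that $f(u)f(v) \in E(H)$ whenever $uv \in E(G)$. The girth of a graph is the length of a shortest cycle (infinite if acyclic). $C_m$ is the cycle on $m$ vertices. *)

From mathcomp Require Import all_boot.
Set Implicit Arguments. Unset Strict Implicit. Unset Printing Implicit Defensive.

Definition simple_graph (T : finType) (e : rel T) : Prop :=
  symmetric e /\ irreflexive e.

(* Outerplanar: the vertices can be placed in convex position (on a circle,
   in the cyclic order given by the injective labelling pos) so that the
   straight-line chords representing the edges pairwise do not cross,
   i.e. there are no edges ab, cd with pos a < pos c < pos b < pos d. *)
Definition outerplanar (T : finType) (e : rel T) : Prop :=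
  exists pos : T -> nat, injective pos /\
    forall a b c d, e a b -> e c d ->
      ~ [/\ pos a < pos c, pos c < pos b & pos b < pos d].

Definition is_graph_cycle (T : finType) (e : rel T) (s : seq T) : Prop :=
  [/\ 3 <= size s, uniq s & cycle e s].

Definition girth_ge (T : finType) (e : rel T) (g : nat) : Prop :=
  forall s, is_graph_cycle e s -> g <= size s.

Definition cycle_adj (m : nat) : rel 'I_m :=
  fun i j => (j == (i.+1 %% m) :> nat) || (i == (j.+1 %% m) :> nat).

Definition graph_hom (T U : finType) (e : rel T) (f' : rel U) (f : T -> U) : Prop :=
  forall x y, e x y -> f' (f x) (f y).

From mathcomp Require Import all_boot zify.

Set Implicit Arguments. Unset Strict Implicit. Unset Printing Implicit Defensive.

(* A vertex of degree at most one is mapped next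
   to the image of its neighbour. Otherwise, in the convex drawing, take an
   edge ab with some vertex strictly between a and b and with pos b - pos a
   minimal. By non-crossing, every neighbour of a vertex strictly between a and
   b lies in the window [a, b], and by minimality it is an immediate neighbour
   in that window; minimum degree two then makes the window a cycle
   a = w_0, ..., w_t = b whose inner vertices have degree two. The girth gives
   t >= 2k - 1, and in C_(2k+1) adjacent vertices are joined by walks of every
   length t >= 2k - 1 (odd lengths by bouncing along the edge, even ones by
   first going once around the cycle), so a homomorphism of the graph without
   the inner vertices of the ear extends along it. *)

Section Walk.
Variables (U : Type) (r : rel U).

Definition walk (x y : U) (t : nat) :=
  exists g : nat -> U, [/\ g 0 = x, g t = y & forall j, j < t -> r (g j) (g j.+1)].

Lemma walk1 x y : r x y -> walk x y 1.
Proof. by move=> rxy; exists (fun j => if j is 0 then x else y); split=> // -[]. Qed.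

Hypothesis r_sym : symmetric r.

Lemma walk_rev x y t : walk x y t -> walk y x t.
Proof.
case=> g [g0 gt g_step]; exists (fun j => g (t - j)); split; rewrite ?subn0 ?subnn //.
move=> j lt_jt; rewrite r_sym; have -> : t - j = (t - j.+1).+1 by lia.
by apply: g_step; lia.
Qed.

Lemma walk_add_double x y t n : r x y -> walk x y t -> walk x y (t + n.*2).
Proof.
move=> rxy; elim: n => [|n IHn]; first by rewrite addn0.
case/IHn=> g [g0 gt g_step].
exists (fun j => match j with 0 => x | 1 => y | j.+2 => g j end).
split=> //; first by rewrite doubleS !addnS.
by case=> [|[|j]] //= lt_j; [rewrite g0 r_sym | apply: g_step; lia].
Qed.

End Walk.

Section CycleWalk.
Variable k : nat.
Local Notation m := (2 * k + 1).
Local Notation adj := (@cycle_adj m).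

Lemma cycle_adjE (i j : 'I_m) : adj i j = (j == ordS i) || (i == ordS j).
Proof. by []. Qed.

Lemma cycle_adj_ordS (x : 'I_m) : adj x (ordS x).
Proof. by rewrite cycle_adjE eqxx. Qed.

Lemma val_iter_ordS (x : 'I_m) j : iter j (@ordS m) x = (x + j) %% m :> nat.
Proof.
elim: j => [|j IHj] /=; first by rewrite addn0 modn_small.
by rewrite IHj -(addn1 ((x + j) %% m)) modnDml -addnA (addn1 j).
Qed.

Lemma cycle_walk_around (x : 'I_m) : walk adj (ordS x) x (2 * k).
Proof.
exists (fun j => iter j (@ordS m) (ordS x)); split=> //.
- apply: val_inj; rewrite /= -iterSr val_iter_ordS.
  by rewrite -(addn1 (2 * k)) modnDr modn_small.
- by move=> j _; apply: cycle_adj_ordS.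
Qed.

Lemma cycle_adj_sym : symmetric adj.
Proof. by move=> i j; rewrite !cycle_adjE orbC. Qed.

Lemma cycle_adj_walk (x y : 'I_m) t : adj x y -> (2 * k).-1 <= t -> walk adj x y t.
Proof.
move=> adj_xy le_t.
wlog ->: x y adj_xy / y = ordS x.
  move=> wlog_Sx; move: (adj_xy); rewrite cycle_adjE => /orP[/eqP Sx | /eqP Sy].
  - exact: wlog_Sx.
  - by apply/(walk_rev cycle_adj_sym)/wlog_Sx; rewrite // cycle_adj_sym.
rewrite -(odd_double_half t); case: (boolP (odd t)) => [odd_t | even_t].
  apply: walk_add_double; [exact: cycle_adj_sym | exact: cycle_adj_ordS |].
  exact/walk1/cycle_adj_ordS.
have le_kt : k <= t./2.
  by move: le_t; rewrite -{1}(odd_double_half t) (negbTE even_t) add0n -mul2n; lia.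
rewrite add0n -(subnKC le_kt) doubleD -mul2n.
apply: walk_add_double; [exact: cycle_adj_sym | exact: cycle_adj_ordS |].
exact/walk_rev/cycle_walk_around/cycle_adj_sym.
Qed.

End CycleWalk.

Section Extension.
Variables (T : finType) (e : rel T) (U : Type) (r : rel U).
Hypotheses (e_sym : symmetric e) (e_irr : irreflexive e) (r_sym : symmetric r).

Definition nbhd (S : {set T}) (v : T) : {set T} := [set u in S | e v u].

Definition hom_on (S : {set T}) (f : T -> U) :=
  {in S &, forall u v, e u v -> r (f u) (f v)}.

Definition inner (L : seq T) : {set T} := [set z in L | 0 < index z L < (size L).-1].

Definition ear (S : {set T}) (L : seq T) :=
  {in inner L & S, forall z y, e z y ->
    index y L = (index z L).-1 \/ index y L = (index z L).+1}.

Lemma hom_on_extend_leaf (S : {set T}) v (f : T -> U) :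
  (forall x, exists y, r x y) -> v \in S -> #|nbhd S v| <= 1 -> hom_on (S :\ v) f ->
  exists g, hom_on S g.
Proof.
move=> r_total vS /card_le1_eqP nbhd_v f_hom.
have [y r_nbhd_y] : exists y, {in nbhd S v, forall u, r (f u) y}.
  have [nbhd0 | [u uN]] := set_0Vmem (nbhd S v).
    by have [y _] := r_total (f v); exists y => u; rewrite nbhd0 inE.
  by have [y rfy] := r_total (f u); exists y => u' u'N; rewrite (nbhd_v u u').
exists (fun z => if z == v then y else f z) => u w uS wS euw.
have [uv | uv] := eqVneq u v; have [wv | wv] := eqVneq w v.
- by rewrite uv wv e_irr in euw.
- by rewrite r_sym; apply: r_nbhd_y; rewrite inE wS -uv.
- by apply: r_nbhd_y; rewrite inE uS e_sym -wv.
- by apply: f_hom; rewrite ?inE ?uv ?wv.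
Qed.

Lemma mem_ear_nbr (S : {set T}) L z y :
  ear S L -> z \in inner L -> y \in S -> e z y -> y \in L.
Proof.
move=> L_ear zI yS ezy; rewrite -index_mem.
have := zI; rewrite inE => /and3P[_ i_gt0 i_lt].
set n := size L in i_lt *; by case: (L_ear z y zI yS ezy) => ->; lia.
Qed.

Lemma head_notin_inner a p : a \notin inner (a :: p).
Proof. by rewrite inE /= eqxx andbF. Qed.

Lemma last_notin_inner a p : uniq (a :: p) -> last a p \notin inner (a :: p).
Proof.
move=> L_uniq; have: index (last a p) (a :: p) = size p.
  by rewrite -[last a p]/(last a (a :: p)) -(nth_last a) index_uniq.
by rewrite inE => ->; rewrite ltnn !andbF.
Qed.

Lemma card_setD_inner (S : {set T}) L :
  uniq L -> 2 < size L -> {subset L <= S} -> #|S :\: inner L| < #|S|.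
Proof.
case: L => [|a p] // L_uniq L3 L_sub.
have inner_sub : inner (a :: p) \subset S.
  by apply/subsetP => z; rewrite inE => /andP[/L_sub].
have inner_gt0 : 0 < #|inner (a :: p)|.
  have L1 : 1 < size (a :: p) by rewrite ltnW.
  by apply/card_gt0P; exists (nth a (a :: p) 1); rewrite inE mem_nth // index_uniq.
by rewrite cardsDS //; have := subset_leq_card inner_sub; lia.
Qed.

Lemma hom_on_extend_ear (S : {set T}) a p (f : T -> U) :
  (forall x y, r x y -> walk r x y (size p)) ->
  uniq (a :: p) -> {subset a :: p <= S} -> e (last a p) a -> ear S (a :: p) ->
  hom_on (S :\: inner (a :: p)) f -> exists h, hom_on S h.
Proof.
set L := a :: p => r_walk L_uniq L_sub e_last L_ear f_hom.
have [g [g0 gp g_step]] : walk r (f a) (f (last a p)) (size p).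
  apply/r_walk; rewrite r_sym; apply: f_hom e_last; rewrite inE L_sub.
  - by rewrite last_notin_inner.
  - exact: mem_last.
  - by rewrite head_notin_inner.
  - exact: mem_head.
pose h z := if z \in inner L then g (index z L) else f z.
have h_L z : z \in L -> h z = g (index z L).
  move=> zL; rewrite /h inE zL andTb; case: ifP => // /negbT not_inner.
  have [i0 | i_gt0] := posnP (index z L).
    by rewrite i0 g0; move: (nth_index a zL); rewrite i0 => <-.
  have ip : index z L = size p.
    apply/eqP; rewrite eqn_leq -ltnS index_mem zL /= leqNgt.
    by rewrite i_gt0 in not_inner.
  by rewrite ip gp; move: (nth_index a zL); rewrite ip (nth_last a L) => <-.
have h_inner z y : z \in inner L -> y \in S -> e z y -> r (h z) (h y).
  move=> zI yS ezy; have yL := mem_ear_nbr L_ear zI yS ezy.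
  have := zI; rewrite inE => /and3P[zL i_gt0 i_lt].
  rewrite (h_L z zL) (h_L y yL).
  case: (L_ear z y zI yS ezy) => ->; last exact: g_step.
  by rewrite r_sym; have := g_step _ (leq_ltn_trans (leq_pred _) i_lt); rewrite prednK.
exists h => u w uS wS euw.
case uI: (u \in inner L); first exact: h_inner.
case wI: (w \in inner L); first by rewrite r_sym; apply: h_inner; rewrite // e_sym.
by rewrite /h uI wI; apply: f_hom; rewrite // inE ?uI ?wI.
Qed.

End Extension.

Section Outerplanar.
Variables (T : finType) (e : rel T) (pos : T -> nat).
Hypotheses (e_sym : symmetric e) (e_irr : irreflexive e) (pos_inj : injective pos).
Hypothesis pos_noncross : forall a b c d, e a b -> e c d ->
  ~ [/\ pos a < pos c, pos c < pos b & pos b < pos d].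

Definition spans (S : {set T}) a b :=
  [&& a \in S, b \in S, e a b & [exists c in S, pos a < pos c < pos b]].

Lemma exists_spans (S : {set T}) :
  S != set0 -> {in S, forall v, 1 < #|nbhd e S v|} -> exists a b, spans S a b.
Proof.
case/set0Pn=> v0 v0S deg2.
have [v vS v_min] := arg_minnP pos v0S.
have [x [y [xN yN xy]]] := card_gt1P (deg2 v vS).
move: xN yN; rewrite !inE => /andP[xS evx] /andP[yS evy].
have pos_nbr z : z \in S -> e v z -> pos v < pos z.
  move=> zS evz; rewrite ltn_neqAle v_min // andbT.
  by apply: contraTneq evz => /pos_inj <-; rewrite e_irr.
wlog lt_xy : x y xS yS evx evy xy / pos x < pos y.
  move=> wlog_xy; have [lt | lt | /pos_inj eq] := ltngtP (pos x) (pos y).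
  - exact: (wlog_xy x y).
  - by apply: (wlog_xy y x); rewrite // eq_sym.
  - by rewrite eq eqxx in xy.
exists v, y; apply/and4P; split=> //; apply/exists_inP; exists x => //.
by rewrite pos_nbr.
Qed.

Section MinimalSpan.
Variables (S : {set T}) (a b : T).
Hypotheses (ab_spans : spans S a b)
  (ab_min : forall a' b', spans S a' b' -> pos b - pos a <= pos b' - pos a').

Definition span_seq :=
  sort (relpre pos leq) (enum [set z in S | pos a <= pos z <= pos b]).
Local Notation L := span_seq.

Lemma mem_span_seq z : (z \in L) = (z \in S) && (pos a <= pos z <= pos b).
Proof. by rewrite mem_sort mem_enum inE. Qed.

Lemma span_seq_sub : {subset L <= S}.
Proof. by move=> z; rewrite mem_span_seq => /andP[]. Qed.

Lemma span_seq_uniq : uniq L.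
Proof. by rewrite sort_uniq enum_uniq. Qed.

Lemma ltn_index_span_seq :
  {in L &, forall y z, (index y L < index z L) = (pos y < pos z)}.
Proof.
have le_pos : {in L &, forall y z, index y L <= index z L -> pos y <= pos z}.
  apply: (sorted_leq_index (leT := relpre pos leq)).
  - by move=> ? ? ?; apply: leq_trans.
  - by move=> ?; apply: leqnn.
  - by apply: sort_sorted => y z; apply: leq_total.
move=> y z yL zL; apply/idP/idP => [lt_yz | ].
  rewrite ltn_neqAle le_pos ?(ltnW lt_yz) // andbT.
  by apply: contraTneq lt_yz => /pos_inj ->; rewrite ltnn.
by apply: contraTT; rewrite -!leqNgt; exact: le_pos.
Qed.

Lemma span_seq_pos z : z \in L -> pos a <= pos z <= pos b.
Proof. by rewrite mem_span_seq => /andP[]. Qed.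

Let eab : e a b.
Proof. by case/and4P: ab_spans. Qed.

Let aL : a \in L.
Proof.
case/and4P: ab_spans => aS _ _ /exists_inP[c _ /andP[ac cb]].
by rewrite mem_span_seq aS leqnn ltnW ?(ltn_trans ac cb).
Qed.

Let bL : b \in L.
Proof.
case/and4P: ab_spans => _ bS _ /exists_inP[c _ /andP[ac cb]].
by rewrite mem_span_seq bS leqnn ltnW ?(ltn_trans ac cb).
Qed.

Lemma index_span_seq_first : index a L = 0.
Proof.
apply/eqP; rewrite -leqn0 leqNgt; apply/negP => i_gt0.
have L_gt0 : 0 < size L by rewrite (leq_trans i_gt0) // ltnW // index_mem.
have /andP[le_aw _] := span_seq_pos (mem_nth a L_gt0).
move: i_gt0; rewrite -{1}(index_uniq a L_gt0 span_seq_uniq).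
by rewrite ltn_index_span_seq ?mem_nth // ltnNge le_aw.
Qed.

Lemma index_span_seq_last : index b L = (size L).-1.
Proof.
have L_gt0 : 0 < size L by rewrite -has_predT; apply/hasP; exists b.
have lt_t : (size L).-1 < size L by rewrite prednK.
have le_bt : index b L <= (size L).-1 by rewrite -ltnS prednK // index_mem.
apply/eqP; rewrite eqn_leq le_bt leqNgt; apply/negP => lt_b.
have /andP[_ le_wb] := span_seq_pos (mem_nth a lt_t).
move: lt_b; rewrite -{1}(index_uniq a lt_t span_seq_uniq).
by rewrite ltn_index_span_seq ?mem_nth // ltnNge le_wb.
Qed.

Lemma span_seq_gap u w : u \in L -> w \in L -> e u w ->
  (index u L).+1 < index w L -> pos b - pos a <= pos w - pos u.
Proof.
move=> uL wL euw gap; have lt_c : (index u L).+1 < size L.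
  by rewrite (ltn_trans gap) ?index_mem.
have cL := mem_nth a lt_c; have c_idx := index_uniq a lt_c span_seq_uniq.
apply: ab_min; apply/and4P; split; rewrite ?span_seq_sub //.
apply/exists_inP; exists (nth a L (index u L).+1); first exact: span_seq_sub.
by rewrite -!ltn_index_span_seq // c_idx ltnSn.
Qed.

Lemma span_seq_inner_pos z : z \in inner L -> pos a < pos z < pos b.
Proof.
rewrite inE => /and3P[zL i_gt0 i_lt].
by rewrite -!ltn_index_span_seq // index_span_seq_first index_span_seq_last i_gt0.
Qed.

Lemma span_seq_nbr z y : z \in inner L -> y \in S -> e z y -> y \in L.
Proof.
move=> zI yS ezy; have /andP[az zb] := span_seq_inner_pos zI.
rewrite mem_span_seq yS andTb; apply/andP; split; rewrite leqNgt; apply/negP => lt.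
- by apply: (pos_noncross _ eab (And3 lt az zb)); rewrite e_sym.
- exact: (pos_noncross eab ezy (And3 az zb lt)).
Qed.

Lemma span_seq_ear : ear e S L.
Proof.
move=> z y zI yS ezy; have yL := span_seq_nbr zI yS ezy.
have zL : z \in L by move: zI; rewrite inE => /andP[].
have /andP[az zb] := span_seq_inner_pos zI.
have /andP[ay yb] := span_seq_pos yL.
have [gap_yz | ] := ltnP (index y L).+1 (index z L).
  by rewrite e_sym in ezy; have := span_seq_gap yL zL ezy gap_yz; lia.
have [gap_zy | ] := ltnP (index z L).+1 (index y L).
  by have := span_seq_gap zL yL ezy gap_zy; lia.
have : index y L != index z L.
  by apply: contraTneq ezy => /(index_inj z yL zL) ->; rewrite e_irr.
lia.
Qed.

Lemma span_seq_inner_adj j :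
  {in S, forall v, 1 < #|nbhd e S v|} -> 0 < j < (size L).-1 ->
  e (nth a L j) (nth a L j.-1) && e (nth a L j) (nth a L j.+1).
Proof.
move=> deg2 /andP[j_gt0 j_lt].
have lt_j : j < size L by rewrite (leq_trans j_lt) ?leq_pred.
set z := nth a L j; have zL : z \in L := mem_nth a lt_j.
have iz : index z L = j := index_uniq a lt_j span_seq_uniq.
have zI : z \in inner L by rewrite inE zL iz j_gt0.
have [x [y [xN yN xy]]] := card_gt1P (deg2 z (span_seq_sub zL)).
move: xN yN; rewrite !inE => /andP[xS ezx] /andP[yS ezy].
have xL := span_seq_nbr zI xS ezx; have yL := span_seq_nbr zI yS ezy.
have ixy : index x L != index y L by apply: contra xy => /eqP/(index_inj z xL yL)->.
move: (span_seq_ear zI xS ezx) (span_seq_ear zI yS ezy) ixy; rewrite iz.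
rewrite -(nth_index a xL) in ezx; rewrite -(nth_index a yL) in ezy.
by case=> ix [] iy; move: ezx ezy; rewrite ix iy ?eqxx // => -> ->.
Qed.

Lemma span_seq_cycle :
  {in S, forall v, 1 < #|nbhd e S v|} -> is_graph_cycle e L.
Proof.
move=> deg2; have [c cS /andP[ac cb]] : exists2 c, c \in S & pos a < pos c < pos b.
  by case/and4P: ab_spans => _ _ _ /exists_inP.
have cL : c \in L by rewrite mem_span_seq cS (ltnW ac) (ltnW cb).
have L3 : 2 < size L.
  move: ac cb; rewrite -!ltn_index_span_seq // index_span_seq_first index_span_seq_last.
  by set n := size L; lia.
have La : nth a L 0 = a by rewrite -{1}index_span_seq_first nth_index.
have Lb : last a L = b by rewrite -nth_last -index_span_seq_last nth_index.
split=> //; first exact: span_seq_uniq.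
rewrite (cycle_path a) Lb; apply/(pathP a) => -[_ | j lt_j] /=.
  by rewrite La e_sym.
set n := size L in L3 lt_j.
have [-> | j_gt0] := posnP j.
  have L1 : 0 < 1 < n.-1 by lia.
  by have /andP[+ _] := span_seq_inner_adj deg2 L1; rewrite e_sym.
have Lj : 0 < j < n.-1 by lia.
by have /andP[_ +] := span_seq_inner_adj deg2 Lj.
Qed.

End MinimalSpan.

Lemma exists_ear (S : {set T}) :
  S != set0 -> {in S, forall v, 1 < #|nbhd e S v|} ->
  exists L, [/\ is_graph_cycle e L, {subset L <= S} & ear e S L].
Proof.
move=> S_n0 deg2; have [a0 [b0 span0]] := exists_spans S_n0 deg2.
have [[a b] ab_spans ab_min] := @arg_minnP _ (a0, b0)
  (fun ab => spans S ab.1 ab.2) (fun ab => pos ab.2 - pos ab.1) span0.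
have {}ab_min a' b' : spans S a' b' -> pos b - pos a <= pos b' - pos a'.
  exact: ab_min (a', b').
exists (span_seq S a b); split.
- exact: span_seq_cycle.
- exact: span_seq_sub.
- exact: span_seq_ear.
Qed.

End Outerplanar.

Section OuterplanarHom.
Variables (k : nat) (T : finType) (e : rel T) (pos : T -> nat).
Hypotheses (e_sym : symmetric e) (e_irr : irreflexive e) (pos_inj : injective pos).
Hypothesis pos_noncross : forall a b c d, e a b -> e c d ->
  ~ [/\ pos a < pos c, pos c < pos b & pos b < pos d].
Hypothesis girth : girth_ge e (2 * k).
Local Notation m := (2 * k + 1).

Lemma exists_hom_on (S : {set T}) : exists f : T -> 'I_m, hom_on e (@cycle_adj m) S f.
Proof.
elim: {S}_.+1 {-2}S (ltnSn #|S|) => // n IH S leSn.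
have [-> | S_n0] := eqVneq S set0.
  by exists (fun=> Ordinal (ltn_addl (2 * k) (ltnSn 0))) => u; rewrite inE.
have [/exists_inP[v vS deg_v] | /exists_inPn deg2] :=
  boolP [exists v in S, #|nbhd e S v| <= 1].
  have [f f_hom] : exists f, hom_on e (@cycle_adj m) (S :\ v) f.
    by apply: IH; rewrite (cardsD1 v S) vS in leSn.
  apply: (hom_on_extend_leaf e_sym e_irr (@cycle_adj_sym k) _ vS deg_v f_hom).
  by move=> x; exists (ordS x); apply: cycle_adj_ordS.
have {}deg2 : {in S, forall v, 1 < #|nbhd e S v|} by move=> v /deg2; rewrite ltnNge.
have [[|a p] [L_cyc L_sub L_ear]] :=
  exists_ear e_sym e_irr pos_inj pos_noncross S_n0 deg2; first by case: L_cyc.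
have [L3 L_uniq L_cycle] := L_cyc.
have [f f_hom] : exists f, hom_on e (@cycle_adj m) (S :\: inner (a :: p)) f.
  by apply: IH; rewrite (leq_trans (card_setD_inner L_uniq L3 L_sub)).
apply: (hom_on_extend_ear e_sym (@cycle_adj_sym k) _ L_uniq L_sub _ L_ear f_hom).
  by move=> x y; have := girth L_cyc; rewrite /= => le_k /cycle_adj_walk; apply; lia.
by move: L_cycle; rewrite /= rcons_path => /andP[].
Qed.

End OuterplanarHom.

Unset Implicit Arguments.

Theorem mainTheorem14 (k : nat) (T : finType) (e : rel T) :
  1 <= k -> simple_graph e -> outerplanar e -> girth_ge e (2 * k) ->
  exists f : T -> 'I_(2 * k + 1), graph_hom e (@cycle_adj (2 * k + 1)) f.
Proof.
move=> _ [e_sym e_irr] [pos [pos_inj pos_noncross]] girth.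
have [f f_hom] := exists_hom_on e_sym e_irr pos_inj pos_noncross girth [set: T].
by exists f => x y; apply: f_hom; rewrite inE.
Qed.
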